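(* Let $S$ be a set of binary words all of the same length and the same weight, and let $\mathcal{L}$ be a list which is a homogeneous Gray code for $S$ and which is suffix partitioned. Then $\mathcal{L}$ is a recursive tail partitioned list.
   Context: The weight of a binary word is its number of 1's. Two binary words differ by a homogeneous transposition if one is obtained from the other by exchanging a 1 and a 0 such that no 1 occurs strictly between the two exchanged positions. A homogeneous Gray code for $S$ is a list containing each word of $S$ exactly once in which any two consecutive words differ by a homogeneous transposition. A list of binary words is suffix partitioned if, for every word $s$, the words of the list having $s$ as a suffix occupy consecutive positions in the list. The tail of a binary word is its unique suffix of the form $01^m$ ($m\ge 0$); the words $1^n$ have no tail. Notation: $\mathcal{A}\cdot w$ denotes the list obtained by appending the word $w$ to the end of each word of the list $\mathcal{A}$, and a comma denotes concatenation of lists. A list of same-length binary words is recursive tail partitioned if it is empty or consists of a single word, or if it has one of the forms $\mathcal{L}=\mathcal{L}_1\cdot 01^u,\ \mathcal{L}_2\cdot 01^{u+1},\ \dots,\ \mathcal{L}_{\ell+1}\cdot 01^{u+\ell}$ or $\mathcal{L}=\mathcal{L}_1\cdot 01^{u+\ell},\ \mathcal{L}_2\cdot 01^{u+\ell-1},\ \dots,\ \mathcal{L}_{\ell+1}\cdot 01^{u}$ for some integers $u,\ell\ge 0$, where each list $\mathcal{L}_i$ (possibly empty) is in turn recursive tail partitioned. (That is, words are grouped by tail, with tail lengths increasing or decreasing along the list, and the list obtained by deleting the common tail from each group is again of this kind.) *)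

From mathcomp Require Import all_boot.
Set Implicit Arguments. Unset Strict Implicit. Unset Printing Implicit Defensive.

(* Binary words are [seq bool] ([true] = 1, [false] = 0), read left to right;
   a suffix is an end segment of the sequence; [u ++ w] appends [w] to [u]. *)
Definition word := seq bool.

Definition weight (w : word) : nat := count id w.

Definition hom_transp (u v : word) : Prop :=
  exists i j : nat,
    [/\ i < j, j < size u, nth false u i != nth false u j,
        (forall l, i < l -> l < j -> nth false u l = false) &
        v = set_nth false (set_nth false u i (nth false u j)) j (nth false u i)].

Definition differ_hom (u v : word) : Prop := hom_transp u v \/ hom_transp v u.

Definition hom_gray_code (S : pred word) (L : seq word) : Prop :=
  [/\ uniq L, (forall w, (w \in L) = S w) &
      (forall i, i.+1 < size L -> differ_hom (nth [::] L i) (nth [::] L i.+1))].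

Definition suffix_partitioned (L : seq word) : Prop :=
  forall (s : word) (i l j : nat), i <= l -> l <= j -> j < size L ->
    suffix s (nth [::] L i) -> suffix s (nth [::] L j) -> suffix s (nth [::] L l).

Definition tail_word (m : nat) : word := false :: nseq m true.

Definition same_length (L : seq word) : Prop :=
  forall w w', w \in L -> w' \in L -> size w = size w'.

Definition glue (Ls : seq (seq word)) (f : nat -> nat) : seq word :=
  flatten [seq [seq w ++ tail_word (f i) | w <- nth [::] Ls i] | i <- iota 0 (size Ls)].

Inductive rtp : seq word -> Prop :=
| rtp_nil : rtp [::]
| rtp_single (w : word) : rtp [:: w]
| rtp_incr (Ls : seq (seq word)) (u : nat) :
    0 < size Ls -> (forall X, X \in Ls -> rtp X) ->
    same_length (glue Ls (fun i => u + i)) ->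
    rtp (glue Ls (fun i => u + i))
| rtp_decr (Ls : seq (seq word)) (u : nat) :
    0 < size Ls -> (forall X, X \in Ls -> rtp X) ->
    same_length (glue Ls (fun i => u + (size Ls).-1 - i)) ->
    rtp (glue Ls (fun i => u + (size Ls).-1 - i)).

Definition recursive_tail_partitioned (L : seq word) : Prop := rtp L.

From mathcomp Require Import all_boot zify.
Set Implicit Arguments. Unset Strict Implicit. Unset Printing Implicit Defensive.

(* A homogeneous transposition changes the length m of the tail 01^m of a word by at
   most one.  By suffix partitioning, the words with a given tail occupy consecutive
   positions, so along the list the tail length moves by steps of at most one and each
   of its values is taken on an interval of positions; such a sequence is monotone.
   Grouping the words by tail and deleting the tails gives lists of shorter words that
   are again suffix partitioned, with consecutive words again differing by a homogeneous
   transposition, and induction on the word length concludes. *)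

(* For a word containing a 0 its tail is [tail_word (tail_len w)]; on [1^n] the value n
   is meaningless. *)
Definition tail_len (w : word) : nat := find negb (rev w).

Definition untail (w : word) : word := take (size w - (tail_len w).+1) w.

Lemma size_tail_word m : size (tail_word m) = m.+1.
Proof. by rewrite /= size_nseq. Qed.

Lemma tail_len_rcons w b : tail_len (rcons w b) = if b then (tail_len w).+1 else 0.
Proof. by rewrite /tail_len rev_rcons; case: b. Qed.

Lemma tail_wordS m : tail_word m.+1 = rcons (tail_word m) true.
Proof. by rewrite /tail_word -addn1 nseqD cats1. Qed.

Lemma tail_len_cat p m : tail_len (p ++ tail_word m) = m.
Proof.
elim: m => [|m IH]; first by rewrite /tail_word cats1 tail_len_rcons.
by rewrite tail_wordS -rcons_cat tail_len_rcons IH.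
Qed.

Lemma tail_len_suffix w m : suffix (tail_word m) w -> tail_len w = m.
Proof. by move=> /suffixP [p ->]; rewrite tail_len_cat. Qed.

Lemma suffix_tail_len w : false \in w -> suffix (tail_word (tail_len w)) w.
Proof.
elim/last_ind: w => // w b IH; rewrite tail_len_rcons; case: b; last first.
  by move=> _; apply/suffixP; exists w; rewrite cats1.
rewrite mem_rcons inE => /IH /suffixP [p Ew].
by apply/suffixP; exists p; rewrite tail_wordS -rcons_cat -Ew.
Qed.

Lemma untailK w : false \in w -> untail w ++ tail_word (tail_len w) = w.
Proof.
move=> /suffix_tail_len /suffixP [p Ew]; rewrite [in LHS]Ew /untail tail_len_cat.
by rewrite size_cat size_tail_word addnK take_size_cat // -Ew.
Qed.

Lemma tail_len_le w p : p < size w -> nth false w p = false -> tail_len w <= size w - p.+1.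
Proof.
move=> lt_pw wp; rewrite leqNgt; apply/negP => /(before_find false).
by rewrite nth_rev ?subnSK ?subKn ?wp //; lia.
Qed.

Lemma tail_len_lt w : false \in w -> tail_len w < size w.
Proof. by move=> /untailK {2}<-; rewrite size_cat size_tail_word; lia. Qed.

Definition swap_word (u : word) i j : word :=
  set_nth false (set_nth false u i (nth false u j)) j (nth false u i).

Lemma nth_swap_word u i j p :
  nth false (swap_word u i j) p = nth false u (if p == i then j else if p == j then i else p).
Proof.
rewrite nth_set_nth /= nth_set_nth /=; have [->|_] := eqVneq p i; last by case: (p == j).
by case: eqVneq => [->|].
Qed.

Lemma size_swap_word u i j :
  i < size u -> j < size u -> size (swap_word u i j) = size u.
Proof. by rewrite !size_set_nth; lia. Qed.

Lemma swap_wordK u i j :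
  i < size u -> j < size u -> swap_word (swap_word u i j) i j = u.
Proof.
move=> iu ju; apply: (@eq_from_nth _ false); first by rewrite !size_swap_word.
move=> p _; rewrite !nth_swap_word.
case: (eqVneq p i) => [->|pi]; first by rewrite eqxx; case: eqVneq => [->|]; rewrite ?eqxx.
by case: (eqVneq p j) => [->|pj]; rewrite ?eqxx ?(negbTE pi) ?(negbTE pj).
Qed.

Lemma hom_transp_sym u v : hom_transp u v -> hom_transp v u.
Proof.
move=> [i [j [lt_ij lt_ju neq_ij zeros ->]]]; have lt_iu := ltn_trans lt_ij lt_ju.
have j_i : j == i = false by lia.
exists i, j; split; rewrite ?size_swap_word //.
- by rewrite !nth_swap_word eqxx j_i eqxx eq_sym.
- move=> l lt_il lt_lj; have [l_i l_j] : l == i = false /\ l == j = false by split; lia.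
  by rewrite nth_swap_word l_i l_j zeros.
- by symmetry; apply: swap_wordK.
Qed.

Lemma hom_transp_has0 u v : hom_transp u v -> false \in u.
Proof.
move=> [i [j [lt_ij lt_ju neq_ij _ _]]].
have : nth false u i = false \/ nth false u j = false.
  by move: neq_ij; case: (nth _ _ i); case: (nth _ _ j); auto.
by case=> <-; apply: mem_nth => //; exact: ltn_trans lt_ij lt_ju.
Qed.

Lemma hom_transp_tail_len u v : hom_transp u v -> tail_len v <= (tail_len u).+1.
Proof.
move=> uv; have /suffix_tail_len /suffixP [p Eu] := hom_transp_has0 uv.
move: uv => [i [j [lt_ij lt_ju neq_ij zeros ->]]]; rewrite -/(swap_word u i j).
(* [z] is the position of the last 0 of [u]. *)
set m := tail_len u in Eu *; set z := size p.
have size_u : size u = z + m.+1 by rewrite Eu size_cat size_tail_word.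
have u_z : nth false u z = false by rewrite Eu nth_cat ltnn subnn.
suff [q [lt_qu swap_q le_zq]] :
    exists q, [/\ q < size u, nth false (swap_word u i j) q = false & z <= q.+1].
  have := tail_len_le _ swap_q; rewrite size_swap_word ?(ltn_trans lt_ij) //; lia.
have [z_i | z_i] := eqVneq z i.
  by exists j; rewrite nth_swap_word eqxx ifN -?z_i; [split=> //; lia | lia].
have [z_j | z_j] := eqVneq z j; last first.
  by exists z; rewrite nth_swap_word (negbTE z_i) (negbTE z_j); split=> //; lia.
have [j_i | j_i] := eqVneq j.-1 i.
  by exists i; rewrite nth_swap_word eqxx -z_j; split=> //; lia.
have [lt_i lt_j] : i < j.-1 /\ j.-1 < j by clear neq_ij; lia.
exists j.-1; rewrite nth_swap_word (negbTE j_i) ifN ?zeros //; first by split=> //; lia.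
by rewrite neq_ltn lt_j.
Qed.

Lemma differ_hom_transp u v : differ_hom u v -> hom_transp u v /\ hom_transp v u.
Proof. by case=> uv; split=> //; apply: hom_transp_sym. Qed.

Lemma hom_transp_catr p q t :
  size p = size q -> hom_transp (p ++ t) (q ++ t) -> hom_transp p q.
Proof.
move=> size_pq [i [j [lt_ij lt_jt neq_ij zeros E]]]; rewrite -/(swap_word _ i j) in E.
have nth_pt l : l < size p -> nth false (p ++ t) l = nth false p l.
  by move=> lt_lp; rewrite nth_cat lt_lp.
have lt_jp : j < size p.
  rewrite ltnNge; apply/negP => le_pj; move: neq_ij.
  have := congr1 (nth false ^~ j) E; rewrite /= nth_swap_word eqxx ifN; last first.
    by rewrite neq_ltn lt_ij orbT.
  by rewrite !nth_cat -size_pq ltnNge le_pj /= => ->; rewrite eqxx.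
have lt_ip := ltn_trans lt_ij lt_jp.
exists i, j; split=> //; first by rewrite -!nth_pt.
  by move=> l lt_il lt_lj; rewrite -nth_pt ?zeros // (ltn_trans lt_lj).
apply: (@eq_from_nth _ false) => [|r]; first by rewrite size_swap_word.
move=> lt_rq; have := congr1 (nth false ^~ r) E; rewrite /= !nth_swap_word.
rewrite [nth _ (q ++ t) _]nth_cat lt_rq => ->; apply: nth_pt.
have lt_rp : r < size p by rewrite size_pq.
by case: ifP => _; [|case: ifP => _].
Qed.

Lemma differ_hom_catr p q t :
  size p = size q -> differ_hom (p ++ t) (q ++ t) -> differ_hom p q.
Proof. by move=> size_pq [] /hom_transp_catr; [left | right]; auto. Qed.

Definition near (a b : nat) : bool := (b <= a.+1) && (a <= b.+1).

Lemma differ_hom_near u v : differ_hom u v -> near (tail_len u) (tail_len v).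
Proof.
move=> /differ_hom_transp [uv vu].
by rewrite /near (hom_transp_tail_len uv) (hom_transp_tail_len vu).
Qed.

Definition contiguous (s : seq nat) : Prop :=
  forall i l j, i <= l -> l <= j -> j < size s ->
    nth 0 s i = nth 0 s j -> nth 0 s l = nth 0 s i.

Lemma contiguous_behead x s : contiguous (x :: s) -> contiguous s.
Proof. by move=> cont i l j le_il le_lj lt_j; apply: (cont i.+1 l.+1 j.+1). Qed.

Lemma contiguous_head x y s : contiguous (x :: y :: s) -> y != x -> x \notin y :: s.
Proof.
move=> cont neq_yx; apply/(nthP 0) => -[p lt_p sp_x].
have /= := cont 0 1 p.+1 isT isT lt_p; rewrite sp_x => /(_ erefl) y_x.
by rewrite y_x eqxx in neq_yx.
Qed.

Lemma path_eq_head (T : eqType) (e e' r : rel T) x s :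
  reflexive r -> path e x s -> path e' x s ->
  (forall y, e x y -> e' x y -> y \in s -> y = x) -> path r x s.
Proof.
move=> r_refl; elim: s => //= y s IH /andP [e_xy e_s] /andP [e'_xy e'_s] eq_x.
have y_x := eq_x y e_xy e'_xy (mem_head y s); subst y.
rewrite r_refl IH // => z e_xz e'_xz z_s.
by apply: eq_x; rewrite // inE z_s orbT.
Qed.

Lemma near_contiguous_monotone s :
  sorted near s -> contiguous s -> sorted leq s \/ sorted geq s.
Proof.
elim: s => [|x s IH]; first by left.
case: s IH => [|y s] IH; first by left.
rewrite /= => /andP [near_xy near_s] cont.
have [/= up | /= down] := IH near_s (contiguous_behead cont).
all: have [<- | y_x] := eqVneq y x; first by [left; rewrite /= leqnn | right; rewrite /= leqnn].
all: have := contiguous_head cont y_x; rewrite inE negb_or => /andP [_ /memPn x_s].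
all: move: near_xy => /andP [le_yx le_xy].
- have [lt_xy | lt_yx] : x < y \/ y < x by lia.
    by left; rewrite /= ltnW.
  right; rewrite /= ltnW //; apply: (path_eq_head (r := geq) leqnn near_s up).
  by move=> z near_yz le_yz /x_s; rewrite /near in near_yz; lia.
- have [lt_xy | lt_yx] : x < y \/ y < x by lia.
    left; rewrite /= ltnW //; apply: (path_eq_head (r := leq) leqnn near_s down).
    by move=> z near_yz le_zy /x_s; rewrite /near in near_yz; lia.
  by right; rewrite /= ltnW.
Qed.

Section KeyGroups.

Variables (T : eqType) (g : T -> nat).

Let key_trans : transitive (relpre g leq).
Proof. by move=> y x z; apply: leq_trans. Qed.

Lemma sorted_key_cut k s : sorted (relpre g leq) s ->
  s = [seq x <- s | g x < k] ++ [seq x <- s | k <= g x].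
Proof.
elim: s => //= x s IH sorted_xs; have /allP ge_x := order_path_min key_trans sorted_xs.
case: (ltnP (g x) k) => [lt_xk | le_kx] /=; first by rewrite -IH // (path_sorted sorted_xs).
rewrite (eq_in_filter (a2 := pred0)) ?filter_pred0; last by move=> y /ge_x /=; lia.
by congr (_ :: _); apply/esym/all_filterP/allP => y /ge_x /=; lia.
Qed.

Lemma sorted_key_infix k s : sorted (relpre g leq) s ->
  exists A B, s = A ++ [seq x <- s | g x == k] ++ B.
Proof.
move=> sorted_s; exists [seq x <- s | g x < k], [seq x <- s | k < g x].
rewrite {1}(sorted_key_cut k sorted_s); congr (_ ++ _).
rewrite {1}(sorted_key_cut k.+1 (sorted_filter key_trans _ sorted_s)) -!filter_predI.
by congr (_ ++ _); apply: eq_filter => x /=; lia.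
Qed.

Lemma sorted_key_flatten a c s : sorted (relpre g leq) s ->
  all (fun x => a <= g x < a + c) s ->
  flatten [seq [seq x <- s | g x == i] | i <- iota a c] = s.
Proof.
elim: c a s => [|c IH] a s sorted_s /allP range_s.
  by case: s sorted_s range_s => // x s _ /(_ x (mem_head x s)); lia.
rewrite /= [RHS](sorted_key_cut a.+1 sorted_s); congr (_ ++ _).
  by apply: eq_in_filter => x /range_s /=; lia.
rewrite -[RHS](IH a.+1) ?(sorted_filter key_trans) //; last first.
  by rewrite all_filter; apply/allP => x /range_s /=; lia.
congr flatten; apply/eq_in_map => i; rewrite mem_iota => /andP [lt_ai _].
by rewrite -filter_predI; apply: eq_filter => x /=; lia.
Qed.

End KeyGroups.

Definition hom_sp_list (n : nat) (L : seq word) : Prop :=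
  [/\ forall w, w \in L -> size w = n,
      forall i, i.+1 < size L -> differ_hom (nth [::] L i) (nth [::] L i.+1)
    & suffix_partitioned L].

Lemma nth_infix (A M B : seq word) i :
  i < size M -> nth [::] (A ++ M ++ B) (size A + i) = nth [::] M i.
Proof. by move=> lt_iM; rewrite nth_cat ltnNge leq_addr addKn nth_cat lt_iM. Qed.

Lemma hom_sp_list_infix n A M B : hom_sp_list n (A ++ M ++ B) -> hom_sp_list n M.
Proof.
case=> sizes adj sp; have size_AMB : size (A ++ M ++ B) = size A + size M + size B.
  by rewrite !size_cat addnA.
split.
- by move=> w w_M; apply: sizes; rewrite !mem_cat w_M orbT.
- move=> i lt_iM; rewrite -(@nth_infix A M B) 1?ltnW // -(@nth_infix A M B) // addnS.
  by apply: adj; lia.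
- move=> s i l j le_il le_lj lt_jM.
  have [lt_iM lt_lM] : i < size M /\ l < size M by lia.
  by rewrite -!(@nth_infix A M B) //; apply: sp; lia.
Qed.

Lemma hom_sp_list_catr n t P :
  hom_sp_list n [seq p ++ t | p <- P] -> hom_sp_list (n - size t) P.
Proof.
case=> sizes adj sp; rewrite size_map in adj.
have size_P p : p \in P -> size p = n - size t.
  by move=> p_P; rewrite -(sizes (p ++ t)) ?size_cat ?addnK //; apply/mapP; exists p.
have nth_t k : k < size P -> nth [::] [seq p ++ t | p <- P] k = nth [::] P k ++ t.
  exact: nth_map.
have suffix_t s p : suffix (s ++ t) (p ++ t) = suffix s p by rewrite suffix_catl // eqxx.
split=> //.
- move=> i lt_iP; have [iP i1P] : nth [::] P i \in P /\ nth [::] P i.+1 \in P.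
    by split; apply: mem_nth; rewrite // ltnW.
  apply: (@differ_hom_catr _ _ t); first by rewrite (size_P _ iP) (size_P _ i1P).
  by rewrite -!nth_t ?(ltnW lt_iP) //; apply: adj.
- move=> s i l j le_il le_lj lt_jP.
  have lt_lP := leq_ltn_trans le_lj lt_jP; have lt_iP := leq_ltn_trans le_il lt_lP.
  rewrite -(suffix_t s (nth _ P i)) -(suffix_t s (nth _ P j)) -(suffix_t s (nth _ P l)).
  by rewrite -!nth_t //; apply: sp; rewrite ?size_map.
Qed.

Lemma glue_iota (F : nat -> seq word) f c :
  glue [seq F i | i <- iota 0 c] f =
  flatten [seq [seq w ++ tail_word (f i) | w <- F i] | i <- iota 0 c].
Proof.
rewrite /glue size_map size_iota; congr flatten; apply/eq_in_map => i.
by rewrite mem_iota => /andP [_ lt_ic]; rewrite (nth_map 0) ?size_iota // nth_iota.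
Qed.

Lemma untailK_map k M : (forall w, w \in M -> false \in w /\ tail_len w = k) ->
  [seq w ++ tail_word k | w <- map untail M] = M.
Proof.
move=> tails; rewrite -map_comp -[RHS]map_id; apply/eq_in_map => w /tails [w0 <-].
exact: untailK.
Qed.

Section TailGroups.

Variables (c : nat) (g : word -> nat) (f : nat -> nat) (L : seq word).
Hypothesis L_sorted : sorted (relpre g leq) L.
Hypothesis L_keys : forall w, w \in L -> [/\ false \in w, g w < c & tail_len w = f (g w)].

Definition tail_groups := [seq map untail [seq w <- L | g w == i] | i <- iota 0 c].

Let group_tails i w : w \in [seq w <- L | g w == i] -> false \in w /\ tail_len w = f i.
Proof. by rewrite mem_filter => /andP [/eqP <- /L_keys []]. Qed.

Lemma glue_tail_groups : glue tail_groups f = L.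
Proof.
rewrite glue_iota -[RHS](@sorted_key_flatten _ g 0 c) //; last by apply/allP => w /L_keys [].
by congr flatten; apply/eq_in_map => i _; apply/untailK_map/group_tails.
Qed.

Lemma tail_groups_hom_sp n : 0 < n -> hom_sp_list n L ->
  forall X, X \in tail_groups -> exists2 m, m < n & hom_sp_list m X.
Proof.
move=> n_gt0 HL _ /mapP [i _ ->]; exists (n - (f i).+1); first lia.
rewrite -(size_tail_word (f i)); apply: hom_sp_list_catr.
have [A [B E]] := sorted_key_infix i L_sorted.
by rewrite untailK_map; [apply: (@hom_sp_list_infix n A _ B); rewrite -E | apply: group_tails].
Qed.

End TailGroups.

Lemma hom_sp_list_has0 n L : hom_sp_list n L -> 1 < size L -> forall w, w \in L -> false \in w.
Proof.
move=> [_ adj _] long w /(nthP [::]) [i lt_iL <-].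
have [lt_i1 | ge_i1] := ltnP i.+1 (size L).
  by have [/hom_transp_has0] := differ_hom_transp (adj i lt_i1).
case: i lt_iL ge_i1 => [|i] lt_iL ge_i1; first lia.
by have [_ /hom_transp_has0] := differ_hom_transp (adj i lt_iL).
Qed.

Lemma hom_sp_list_tails_monotone n L : hom_sp_list n L -> 1 < size L ->
  sorted leq (map tail_len L) \/ sorted geq (map tail_len L).
Proof.
move=> HL long; have L0 := hom_sp_list_has0 HL long; case: HL => _ adj sp.
apply: near_contiguous_monotone.
  apply/(sortedP 0) => i; rewrite size_map => lt_i.
  rewrite !(nth_map [::]) ?(ltnW lt_i) //; exact/differ_hom_near/adj.
move=> i l j le_il le_lj; rewrite size_map => lt_jL.
have tail_suffix k : k < size L -> suffix (tail_word (tail_len (nth [::] L k))) (nth [::] L k).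
  by move=> lt_kL; apply/suffix_tail_len/L0/mem_nth.
have lt_lL := leq_ltn_trans le_lj lt_jL; have lt_iL := leq_ltn_trans le_il lt_lL.
rewrite !(nth_map [::]) // => tails_ij.
apply: tail_len_suffix; apply: (sp _ i l j) => //; first exact: tail_suffix.
by rewrite tails_ij; apply: tail_suffix.
Qed.

Lemma hom_sp_list_rtp n L : hom_sp_list n L -> rtp L.
Proof.
elim/ltn_ind: n L => n IH L HL.
have [short | long] := leqP (size L) 1.
  by case: L {HL} short => [|w [|]] // _; constructor.
have L0 := hom_sp_list_has0 HL long; have [sizes _ _] := HL.
have lt_tail w : w \in L -> tail_len w < n.
  by move=> w_L; rewrite -(sizes w w_L) tail_len_lt ?L0.
have n_gt0 : 0 < n := leq_ltn_trans (leq0n _) (lt_tail _ (mem_nth [::] (ltnW long))).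
have same : same_length L by move=> w w' /sizes -> /sizes ->.
have groups_rtp g f : sorted (relpre g leq) L ->
    (forall w, w \in L -> [/\ false \in w, g w < n & tail_len w = f (g w)]) ->
    forall X, X \in tail_groups n g L -> rtp X.
  by move=> L_sorted L_keys X /(tail_groups_hom_sp L_sorted L_keys n_gt0 HL) [m /IH]; apply.
(* The groups are indexed by all tail lengths 0..n-1, empty ones included; in the
   decreasing case the key [g] reverses this order. *)
have [up | down] := hom_sp_list_tails_monotone HL long.
- have L_sorted : sorted (relpre tail_len leq) L by rewrite -sorted_map.
  have L_keys w : w \in L -> [/\ false \in w, tail_len w < n & tail_len w = 0 + tail_len w].
    by move=> w_L; rewrite ?L0 ?lt_tail.
  rewrite -(glue_tail_groups L_sorted L_keys); apply: rtp_incr.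
  + by rewrite size_map size_iota.
  + exact: groups_rtp L_sorted L_keys.
  + by rewrite glue_tail_groups.
- set g := fun w => n.-1 - tail_len w.
  have L_sorted : sorted (relpre g leq) L.
    by move: down; rewrite sorted_map; apply: sub_sorted => u v /=; rewrite /g; lia.
  set f := fun i => 0 + (size (tail_groups n g L)).-1 - i.
  have L_keys w : w \in L -> [/\ false \in w, g w < n & tail_len w = f (g w)].
    move=> w_L; have := lt_tail w w_L; rewrite /f /g /tail_groups size_map size_iota => lt_wn.
    by split; [exact: L0 | lia | lia].
  rewrite -(glue_tail_groups L_sorted L_keys); apply: rtp_decr.
  + by rewrite size_map size_iota.
  + exact: groups_rtp L_sorted L_keys.
  + by rewrite glue_tail_groups.
Qed.

Theorem theorem1 (n k : nat) (S : pred word) (L : seq word) :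
  (forall w, S w -> size w = n /\ weight w = k) ->
  hom_gray_code S L ->
  suffix_partitioned L ->
  recursive_tail_partitioned L.
Proof.
move=> S_words [_ L_S adj] sp; apply: (@hom_sp_list_rtp n); split=> // w.
by rewrite L_S => /S_words [].
Qed.
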